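(* Let $\mathbf{s}=(s_n)_{n\geq1}$ be a strictly increasing sequence of positive integers such that $s_n$ divides $s_{n+1}$ for all $n$. Then there exists a continuous injective map $\pi\colon G_{\mathbf{s}}\to\mathbb{R}$ such that the map $f=\pi\circ T_{\mathbf{s}}\circ\pi^{-1}$ on the Cantor set $\pi(G_{\mathbf{s}})$ satisfies $f'(x)=0$ for every $x\in\pi(G_{\mathbf{s}})$.
   Context: For $n\geq1$ let $\pi_n\colon\mathbb{Z}_{s_{n+1}}\to\mathbb{Z}_{s_n}$, $\pi_n(m)=m \bmod s_n$. Let $G_{\mathbf{s}}=\{x\in\prod_{n\geq1}\mathbb{Z}_{s_n}: x_n=\pi_n(x_{n+1})\text{ for all }n\}$ with the product topology (each $\mathbb{Z}_{s_n}$ discrete), and $T_{\mathbf{s}}\colon G_{\mathbf{s}}\to G_{\mathbf{s}}$ given by $T_{\mathbf{s}}(x)_n=x_n+1 \pmod{s_n}$. For $K\subseteq\mathbb{R}$ perfect and $f\colon K\to K$, $f'(x)=\lim_{y\to x,\,y\in K\setminus\{x\}}\frac{f(y)-f(x)}{y-x}$. *)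

From Stdlib Require Export Reals Arith.
Open Scope R_scope.

(* A sequence s = (s_1, s_2, ...) is represented as s : nat -> nat with
   s 0 = s_1, s 1 = s_2, ... (index shifted by one). *)

Definition inG (s : nat -> nat) (x : nat -> nat) : Prop :=
  forall n : nat, (x n < s n)%nat /\ x n = Nat.modulo (x (S n)) (s n).

Definition odoT (s : nat -> nat) (x : nat -> nat) : nat -> nat :=
  fun n => Nat.modulo (x n + 1) (s n).

(* Continuity of p : G_s -> R for the product topology (discrete factors):
   cylinder sets fixing the first N coordinates form a neighbourhood base. *)
Definition G_continuous (s : nat -> nat) (p : (nat -> nat) -> R) : Prop :=
  forall x, inG s x -> forall eps, 0 < eps ->
    exists N : nat, forall y, inG s y ->
      (forall n, (n < N)%nat -> y n = x n) -> Rabs (p y - p x) < eps.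

Definition G_injective (s : nat -> nat) (p : (nat -> nat) -> R) : Prop :=
  forall x y, inG s x -> inG s y -> p x = p y -> forall n, x n = y n.

Definition image_perfect (s : nat -> nat) (p : (nat -> nat) -> R) : Prop :=
  forall x, inG s x -> forall eps, 0 < eps ->
    exists y, inG s y /\ p y <> p x /\ Rabs (p y - p x) < eps.

(* f = p o T_s o p^{-1} on K = p(G_s) has derivative 0 at every point of K:
   lim_{z -> p x, z in K \ {p x}} (f z - f (p x)) / (z - p x) = 0.
   With z = p y (y in G_s), f z = p (T_s y). *)
Definition conj_deriv_zero (s : nat -> nat) (p : (nat -> nat) -> R) : Prop :=
  forall x, inG s x -> forall eps, 0 < eps ->
    exists delta, 0 < delta /\
      forall y, inG s y -> p y <> p x -> Rabs (p y - p x) < delta ->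
        Rabs ((p (odoT s y) - p (odoT s x)) / (p y - p x)) < eps.

From Coquelicot Require Import Coquelicot.
From Stdlib Require Import Reals Arith Lia Lra Classical.
Open Scope R_scope.

(* A point [x] is sent to the lacunary sum of [(1/4)^e_n], where the exponent
   [e_n] encodes the digit [x (n+1)] and lies in a block of its own.  With ratio
   1/4 the first term in which two sums differ dominates the rest, so the map is
   injective and continuous, and [|pi y - pi x|] is comparable to [(1/4)^e] for
   the first differing exponent [e].

   The exponent ranks [x (n+1)] first by the residue [x n], with the residues
   rotated so that the step [x n -> x n + 1] raises the rank unless it lands on
   [s (n-1)]; for a fixed [T x] that happens only finitely often, because it
   forces [(T x) (n-1) = 0 <> (T x) n].  Exponents at level [n] are multiples
   of [n+1] apart, so when [y] first differs from [x] at a high level [m+1],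
   the level-[m] exponents of [T y] and [T x] exceed those of [y] and [x] by at
   least [m+1]; hence [|pi (T y) - pi (T x)| <= C 4^-(m+1) |pi y - pi x|]. *)

(** * Arithmetic in the odometer *)

Lemma mod_mod_of_divide (a n d : nat) : Nat.divide d n -> ((a mod n) mod d = a mod d)%nat.
Proof.
  intros [k ->].
  replace a with (a mod (k * d) + k * (a / (k * d)) * d)%nat at 2
    by (pose proof (Nat.div_mod_eq a (k * d)); lia).
  now rewrite Nat.Div0.mod_add.
Qed.

Lemma mod_succ_ne0 (a n : nat) : ((a + 1) mod n <> 0 -> (a + 1) mod n = a mod n + 1)%nat.
Proof.
  destruct (Nat.eq_dec n 0) as [-> | Hn]; [reflexivity |].
  rewrite <- Nat.Div0.add_mod_idemp_l. intros H.
  pose proof (Nat.mod_upper_bound a n Hn).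
  destruct (Nat.eq_dec (a mod n + 1) n) as [E | E].
  - now rewrite E, Nat.Div0.mod_same in H.
  - apply Nat.mod_small. lia.
Qed.

Lemma divide_le_index (s : nat -> nat) (k j : nat) :
  (forall n, Nat.divide (s n) (s (S n))) -> (k <= j)%nat -> Nat.divide (s k) (s j).
Proof.
  intros hdiv H. induction H; [apply Nat.divide_refl |].
  eapply Nat.divide_trans; eauto.
Qed.

Lemma inG_mod_le (s : nat -> nat) (z : nat -> nat) (k j : nat) :
  (forall n, Nat.divide (s n) (s (S n))) -> inG s z -> (k <= j)%nat ->
  z k = (z j mod s k)%nat.
Proof.
  intros hdiv hz H. induction H.
  - symmetry. apply Nat.mod_small, hz.
  - rewrite IHle, (proj2 (hz m)). apply mod_mod_of_divide, divide_le_index; assumption.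
Qed.

Definition odo_add (s : nat -> nat) (c : nat) (x : nat -> nat) : nat -> nat :=
  fun n => ((x n + c) mod s n)%nat.

Lemma inG_odo_add (s : nat -> nat) (c : nat) (x : nat -> nat) :
  (forall n, (0 < s n)%nat) -> (forall n, Nat.divide (s n) (s (S n))) ->
  inG s x -> inG s (odo_add s c x).
Proof.
  intros hpos hdiv hx n. unfold odo_add. split.
  - apply Nat.mod_upper_bound. specialize (hpos n). lia.
  - rewrite mod_mod_of_divide by apply hdiv.
    now rewrite (proj2 (hx n)), Nat.Div0.add_mod_idemp_l.
Qed.

Lemma odo_add_period (s x : nat -> nat) (m n : nat) :
  (forall n, Nat.divide (s n) (s (S n))) -> inG s x -> (n <= m)%nat ->
  odo_add s (s m) x n = x n.
Proof.
  intros hdiv hx H. unfold odo_add.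
  destruct (divide_le_index s n m hdiv H) as [k ->].
  rewrite Nat.Div0.mod_add. apply Nat.mod_small, hx.
Qed.

Lemma odo_add_period_next (s x : nat -> nat) (m : nat) :
  (forall n, (0 < s n)%nat) -> (forall n, (s n < s (S n))%nat) -> inG s x ->
  odo_add s (s m) x (S m) <> x (S m).
Proof.
  intros hpos hinc hx. unfold odo_add.
  pose proof (proj1 (hx (S m))). specialize (hinc m). specialize (hpos m).
  destruct (Nat.lt_ge_cases (x (S m) + s m) (s (S m))).
  - rewrite Nat.mod_small; lia.
  - replace (x (S m) + s m)%nat with (x (S m) + s m - s (S m) + 1 * s (S m))%nat by lia.
    rewrite Nat.Div0.mod_add, Nat.mod_small; lia.
Qed.

Lemma inG_eventually_no_rise (s z : nat -> nat) :
  (forall n, Nat.divide (s n) (s (S n))) -> inG s z ->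
  exists M, forall k, (M <= k)%nat -> z k = 0%nat -> z (S k) = 0%nat.
Proof.
  intros hdiv hz.
  destruct (classic (exists j, z j <> 0%nat)) as [[j Hj] | Hzero].
  - exists j. intros k Hk Ek. exfalso. apply Hj.
    now rewrite (inG_mod_le s z j k hdiv hz Hk), Ek, Nat.Div0.mod_0_l.
  - exists 0%nat. intros k _ _. apply NNPP. intros Hk. eauto.
Qed.

(** * Ranking the residues at each level *)

Definition rank (s : nat -> nat) (m a : nat) : nat :=
  ((a + (s m - s (pred m))) mod s m)%nat.

Lemma rank_lt (s : nat -> nat) (m a : nat) : (0 < s m)%nat -> (rank s m a < s m)%nat.
Proof. intros H. apply Nat.mod_upper_bound. lia. Qed.

Lemma rank_succ (s : nat -> nat) (m a : nat) :
  rank s m ((a + 1) mod s m) <> 0%nat ->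
  rank s m ((a + 1) mod s m) = (rank s m a + 1)%nat.
Proof.
  unfold rank. rewrite Nat.Div0.add_mod_idemp_l.
  replace (a + 1 + (s m - s (pred m)))%nat with (a + (s m - s (pred m)) + 1)%nat by lia.
  apply mod_succ_ne0.
Qed.

Lemma rank_eq0 (s : nat -> nat) (m a : nat) :
  (s (pred m) < s m)%nat -> (a < s m)%nat -> rank s m a = 0%nat -> a = s (pred m).
Proof.
  unfold rank. intros Hlt Ha.
  destruct (Nat.lt_ge_cases (a + (s m - s (pred m))) (s m)).
  - rewrite Nat.mod_small; lia.
  - replace (a + (s m - s (pred m)))%nat with (a - s (pred m) + 1 * s m)%nat by lia.
    rewrite Nat.Div0.mod_add, Nat.mod_small; lia.
Qed.

Lemma rank_odoT_eventually (s x : nat -> nat) :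
  (forall n, (0 < s n)%nat) -> (forall n, (s n < s (S n))%nat) ->
  (forall n, Nat.divide (s n) (s (S n))) -> inG s x ->
  exists M, forall m, (M <= m)%nat -> rank s m (odoT s x m) = (rank s m (x m) + 1)%nat.
Proof.
  intros hpos hinc hdiv hx.
  pose proof (inG_odo_add s 1 x hpos hdiv hx) as hz.
  destruct (inG_eventually_no_rise s _ hdiv hz) as [M HM].
  exists (S M). intros [| k] Hk; [lia |].
  apply rank_succ. fold (odo_add s 1 x (S k)). intros E.
  apply rank_eq0 in E; [| apply hinc | apply hz]. simpl pred in E.
  assert (Hk0 : odo_add s 1 x k = 0%nat).
  { now rewrite (proj2 (hz k)), E, Nat.Div0.mod_same. }
  specialize (HM k ltac:(lia) Hk0). specialize (hpos k). lia.
Qed.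

Fixpoint block (s : nat -> nat) (m : nat) : nat :=
  match m with
  | O => O
  | S k => (block s k + (k + 1) * (s (S k) * s k))%nat
  end.

(* [b] is the digit at level [m+1], and [b mod s m] the digit at level [m]. *)
Definition exponent (s : nat -> nat) (m b : nat) : nat :=
  (block s m + (m + 1) * (s (S m) * rank s m (b mod s m) + b))%nat.

Lemma exponent_in_block (s : nat -> nat) (m b : nat) :
  (0 < s m)%nat -> (b < s (S m))%nat ->
  (block s m <= exponent s m b < block s (S m))%nat.
Proof.
  intros Hm Hb. pose proof (rank_lt s m (b mod s m) Hm). unfold exponent. simpl block.
  assert (s (S m) * rank s m (b mod s m) + b < s (S m) * s m)%nat by nia.
  split; [lia | nia].
Qed.

Lemma exponent_inj (s : nat -> nat) (m b b' : nat) :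
  (b < s (S m))%nat -> (b' < s (S m))%nat -> exponent s m b = exponent s m b' -> b = b'.
Proof.
  unfold exponent. intros Hb Hb' E.
  assert (E' : (s (S m) * rank s m (b mod s m) + b = s (S m) * rank s m (b' mod s m) + b')%nat)
    by nia.
  destruct (Nat.lt_trichotomy (rank s m (b mod s m)) (rank s m (b' mod s m))) as [H | [H | H]];
    nia.
Qed.

Lemma exponent_ge_rank (s : nat -> nat) (m b : nat) :
  (block s m + (m + 1) * (s (S m) * rank s m (b mod s m)) <= exponent s m b)%nat.
Proof. unfold exponent. nia. Qed.

Lemma exponent_le_rank (s : nat -> nat) (m b : nat) : (b < s (S m))%nat ->
  (exponent s m b + (m + 1) <= block s m + (m + 1) * (s (S m) * (rank s m (b mod s m) + 1)))%nat.
Proof. unfold exponent. nia. Qed.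

Lemma block_ge (s : nat -> nat) (m : nat) : (forall n, (0 < s n)%nat) -> (m <= block s m)%nat.
Proof.
  intros hpos. induction m as [| m IH]; simpl; [lia |].
  pose proof (hpos m). pose proof (hpos (S m)). nia.
Qed.

Lemma block_mono (s : nat -> nat) (m n : nat) : (m <= n)%nat -> (block s m <= block s n)%nat.
Proof. intros H. induction H; simpl; lia. Qed.

(** * Lacunary sums of powers of 1/4 *)

Definition in_blocks (G E : nat -> nat) : Prop := forall n, (G n <= E n < G (S n))%nat.

Definition lac_sum (E : nat -> nat) : R := Series (fun n => (/ 4) ^ E n).

Lemma pow_quarter_pos (n : nat) : 0 < (/ 4) ^ n.
Proof. apply pow_lt. lra. Qed.

Lemma pow_quarter_le (a b : nat) : (a <= b)%nat -> (/ 4) ^ b <= (/ 4) ^ a.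
Proof.
  intros H. replace b with (a + (b - a))%nat by lia. rewrite pow_add.
  assert ((/ 4) ^ (b - a) <= 1) by (rewrite <- (pow1 (b - a)); apply pow_incr; lra).
  pose proof (pow_quarter_pos a). nra.
Qed.

Lemma pow_quarter_small (e : R) : 0 < e -> exists N, forall n, (N <= n)%nat -> (/ 4) ^ n < e.
Proof.
  intros He. destruct (pow_lt_1_zero (/ 4)) with (y := e) as [N HN]; auto.
  { rewrite Rabs_pos_eq; lra. }
  exists N. intros n Hn. specialize (HN n Hn).
  rewrite Rabs_pos_eq in HN; [exact HN | left; apply pow_quarter_pos].
Qed.

Lemma is_series_pow_quarter (a : nat) : is_series (fun k => (/ 4) ^ (a + k)) (4 / 3 * (/ 4) ^ a).
Proof.
  assert (H : is_series (fun k => (/ 4) ^ k) (/ (1 - / 4))).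
  { apply is_series_geom. rewrite Rabs_pos_eq; lra. }
  apply (is_series_scal_l ((/ 4) ^ a)) in H.
  replace (4 / 3 * (/ 4) ^ a) with (scal ((/ 4) ^ a) (/ (1 - / 4)))
    by (unfold scal; simpl; unfold mult; simpl; field).
  apply (is_series_ext _ _ _ (fun k => eq_sym (pow_add _ a k)) H).
Qed.

Lemma in_blocks_shift (G E : nat -> nat) (m : nat) :
  in_blocks G E -> in_blocks (fun k => G (m + k)%nat) (fun k => E (m + k)%nat).
Proof. intros H k. rewrite Nat.add_succ_r. apply H. Qed.

Lemma in_blocks_ge (G E : nat -> nat) (k : nat) : in_blocks G E -> (G 0 + k <= E k)%nat.
Proof.
  intros H. assert (HG : forall j, (G 0 + j <= G j)%nat).
  { induction j as [| j IH]; [lia |]. specialize (H j). lia. }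
  specialize (H k). specialize (HG k). lia.
Qed.

Lemma ex_series_lac (G E : nat -> nat) : in_blocks G E -> ex_series (fun n => (/ 4) ^ E n).
Proof.
  intros H. apply (@ex_series_le R_AbsRing R_CompleteNormedModule _ (fun k => (/ 4) ^ (G 0%nat + k)%nat)).
  - intros k. change (norm ((/ 4) ^ E k)) with (Rabs ((/ 4) ^ E k)).
    rewrite Rabs_pos_eq by (left; apply pow_quarter_pos).
    apply pow_quarter_le, in_blocks_ge, H.
  - eexists. apply is_series_pow_quarter.
Qed.

Lemma lac_sum_ext (E E' : nat -> nat) : (forall n, E n = E' n) -> lac_sum E = lac_sum E'.
Proof. intros H. apply Series_ext. intros n. now rewrite H. Qed.

Lemma lac_sum_bounds (G E : nat -> nat) : in_blocks G E -> 0 <= lac_sum E <= 4 / 3 * (/ 4) ^ G 0%nat.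
Proof.
  intros H. split.
  - rewrite <- (Rmult_0_l (Series (fun k => (/ 4) ^ k))), <- Series_scal_l.
    apply Series_le; [| exact (ex_series_lac _ _ H)].
    intros n. pose proof (pow_quarter_pos n). pose proof (pow_quarter_pos (E n)). lra.
  - rewrite <- (is_series_unique _ _ (is_series_pow_quarter (G 0%nat))).
    apply Series_le; [| eexists; apply is_series_pow_quarter].
    intros n. split; [left; apply pow_quarter_pos |].
    apply pow_quarter_le, in_blocks_ge, H.
Qed.

Lemma lac_sum_tail_bounds (G E : nat -> nat) (m : nat) : in_blocks G E ->
  0 <= lac_sum (fun k => E (m + k)%nat) <= 4 / 3 * (/ 4) ^ G m.
Proof.
  intros H. pose proof (lac_sum_bounds _ _ (in_blocks_shift G E m H)) as B.
  simpl in B. now rewrite Nat.add_0_r in B.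
Qed.

Lemma lac_sum_split (G E : nat -> nat) (m : nat) : in_blocks G E ->
  lac_sum (fun k => E (m + k)%nat) = (/ 4) ^ E m + lac_sum (fun k => E (S m + k)%nat).
Proof.
  intros H. unfold lac_sum at 1.
  rewrite Series_incr_1 by exact (ex_series_lac _ _ (in_blocks_shift G E m H)).
  rewrite Nat.add_0_r. f_equal. apply lac_sum_ext. intros k. now rewrite Nat.add_succ_r.
Qed.

Lemma lac_sum_sub_shift (G E E' : nat -> nat) (m : nat) :
  in_blocks G E -> in_blocks G E' -> (forall n, (n < m)%nat -> E n = E' n) ->
  lac_sum E - lac_sum E' = lac_sum (fun k => E (m + k)%nat) - lac_sum (fun k => E' (m + k)%nat).
Proof.
  intros HE HE'. induction m as [| m IH]; intros Hag; [reflexivity |].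
  rewrite IH by (intros n Hn; apply Hag; lia).
  rewrite (lac_sum_split G E m HE), (lac_sum_split G E' m HE'), Hag by lia. ring.
Qed.

Lemma lac_sum_sub_le (G E E' : nat -> nat) (m L : nat) :
  in_blocks G E -> in_blocks G E' -> (forall n, (n < m)%nat -> E n = E' n) ->
  (L <= E m)%nat -> (L <= E' m)%nat -> (L <= G (S m))%nat ->
  Rabs (lac_sum E - lac_sum E') <= 7 / 3 * (/ 4) ^ L.
Proof.
  intros HE HE' Hag H1 H2 H3.
  rewrite (lac_sum_sub_shift G E E' m HE HE' Hag), (lac_sum_split G E m HE), (lac_sum_split G E' m HE').
  pose proof (lac_sum_tail_bounds G E (S m) HE). pose proof (lac_sum_tail_bounds G E' (S m) HE').
  pose proof (pow_quarter_le _ _ H1). pose proof (pow_quarter_le _ _ H2).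
  pose proof (pow_quarter_le _ _ H3). pose proof (pow_quarter_pos (E m)). pose proof (pow_quarter_pos (E' m)).
  apply Rabs_le. lra.
Qed.

(* With ratio 1/4 the leading term outweighs everything after it:
   [1 - 1/4 - (4/3)(1/4) = 5/12]. *)
Lemma leading_term_dominates (a a' : nat) (t t' : R) : (a < a')%nat ->
  0 <= t -> t' <= 4 / 3 * (/ 4) ^ S a -> 5 / 12 * (/ 4) ^ a <= ((/ 4) ^ a + t) - ((/ 4) ^ a' + t').
Proof.
  intros Ha Ht Ht'. pose proof (pow_quarter_le (S a) a' Ha). simpl in *. lra.
Qed.

Lemma lac_sum_sub_ge (G E E' : nat -> nat) (m U : nat) :
  in_blocks G E -> in_blocks G E' -> (forall n, (n < m)%nat -> E n = E' n) -> E m <> E' m ->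
  (E m <= U)%nat -> (E' m <= U)%nat ->
  5 / 12 * (/ 4) ^ U <= Rabs (lac_sum E - lac_sum E').
Proof.
  intros HE HE' Hag Hne H1 H2.
  rewrite (lac_sum_sub_shift G E E' m HE HE' Hag), (lac_sum_split G E m HE), (lac_sum_split G E' m HE').
  pose proof (lac_sum_tail_bounds G E (S m) HE). pose proof (lac_sum_tail_bounds G E' (S m) HE').
  assert (HG : forall a, (a < G (S m))%nat -> (/ 4) ^ G (S m) <= (/ 4) ^ S a)
    by (intros a Ha; apply pow_quarter_le; lia).
  pose proof (HG _ (proj2 (HE m))). pose proof (HG _ (proj2 (HE' m))).
  set (t := lac_sum (fun k => E (S m + k)%nat)) in *.
  set (t' := lac_sum (fun k => E' (S m + k)%nat)) in *.
  destruct (Nat.lt_gt_cases (E m) (E' m)) as [[Hlt | Hlt] _]; [exact Hne | |].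
  - pose proof (pow_quarter_le _ _ H1). pose proof (pow_quarter_pos (E m)).
    pose proof (leading_term_dominates _ _ t t' Hlt ltac:(lra) ltac:(lra)).
    rewrite Rabs_pos_eq; lra.
  - pose proof (pow_quarter_le _ _ H2). pose proof (pow_quarter_pos (E' m)).
    pose proof (leading_term_dominates _ _ t' t Hlt ltac:(lra) ltac:(lra)).
    rewrite Rabs_minus_sym, Rabs_pos_eq; lra.
Qed.

Lemma first_difference (E E' : nat -> nat) : ~ (forall n, E n = E' n) ->
  exists m, E m <> E' m /\ forall k, (k < m)%nat -> E k = E' k.
Proof.
  intros H. apply not_all_ex_not in H.
  destruct (dec_inh_nat_subset_has_unique_least_element (fun n => E n <> E' n)) as [m [[Hm Hleast] _]].
  - intros n. destruct (Nat.eq_dec (E n) (E' n)); tauto.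
  - exact H.
  - exists m. split; [exact Hm |]. intros k Hk.
    destruct (Nat.eq_dec (E k) (E' k)) as [| Hne]; [assumption |].
    specialize (Hleast k Hne). lia.
Qed.

Lemma lac_sum_inj (G E E' : nat -> nat) :
  in_blocks G E -> in_blocks G E' -> lac_sum E = lac_sum E' -> forall n, E n = E' n.
Proof.
  intros HE HE' Heq. apply NNPP. intros Hne.
  destruct (first_difference E E' Hne) as [m [Hm Hag]].
  pose proof (lac_sum_sub_ge G E E' m _ HE HE' Hag Hm (Nat.le_max_l _ _) (Nat.le_max_r _ _)) as H.
  rewrite Heq, Rminus_diag, Rabs_R0 in H. pose proof (pow_quarter_pos (Nat.max (E m) (E' m))). lra.
Qed.

(** * The embedding of the odometer *)

Definition odo_exponents (s x : nat -> nat) (n : nat) : nat := exponent s n (x (S n)).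

Definition odo_embed (s : nat -> nat) (x : nat -> nat) : R := lac_sum (odo_exponents s x).

Section Embedding.

Variable s : nat -> nat.
Hypothesis hpos : forall n, (0 < s n)%nat.
Hypothesis hinc : forall n, (s n < s (S n))%nat.
Hypothesis hdiv : forall n, Nat.divide (s n) (s (S n)).

Lemma odo_exponents_in_blocks (x : nat -> nat) : inG s x -> in_blocks (block s) (odo_exponents s x).
Proof. intros hx n. apply exponent_in_block; [apply hpos | apply hx]. Qed.

Lemma odo_exponents_eq_iff (x y : nat -> nat) (n : nat) : inG s x -> inG s y ->
  odo_exponents s x n = odo_exponents s y n <-> x (S n) = y (S n).
Proof.
  intros hx hy. unfold odo_exponents. split; [| now intros ->].
  apply exponent_inj; [apply hx | apply hy].
Qed.

Lemma odo_embed_close (x y : nat -> nat) (m : nat) : inG s x -> inG s y ->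
  (forall n, (n <= m)%nat -> y n = x n) -> Rabs (odo_embed s y - odo_embed s x) <= 7 / 3 * (/ 4) ^ m.
Proof.
  intros hx hy Hag. pose proof (odo_exponents_in_blocks x hx) as Bx.
  pose proof (odo_exponents_in_blocks y hy) as By.
  assert (Hexp : forall n, (n < m)%nat -> odo_exponents s y n = odo_exponents s x n).
  { intros n Hn. apply odo_exponents_eq_iff; [exact hy | exact hx | apply Hag; lia]. }
  pose proof (lac_sum_sub_le _ _ _ m (block s m) By Bx Hexp (proj1 (By m)) (proj1 (Bx m))
                (block_mono s m (S m) (Nat.le_succ_diag_r m))).
  pose proof (pow_quarter_le _ _ (block_ge s m hpos)). unfold odo_embed. lra.
Qed.

Lemma odo_embed_continuous : G_continuous s (odo_embed s).
Proof.
  intros x hx eps heps. destruct (pow_quarter_small (3 / 7 * eps)) as [m Hm]; [lra |].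
  exists (S m). intros y hy Hag.
  eapply Rle_lt_trans; [apply (odo_embed_close x y m hx hy) |].
  - intros n Hn. apply Hag. lia.
  - specialize (Hm m (le_n m)). lra.
Qed.

Lemma odo_embed_injective : G_injective s (odo_embed s).
Proof.
  intros x y hx hy Heq.
  assert (Hsucc : forall n, x (S n) = y (S n)).
  { intros n. apply (odo_exponents_eq_iff x y n hx hy).
    exact (lac_sum_inj _ _ _ (odo_exponents_in_blocks x hx) (odo_exponents_in_blocks y hy) Heq n). }
  intros n. now rewrite (proj2 (hx n)), (proj2 (hy n)), Hsucc.
Qed.

(* The witness [x + s m] agrees with [x] up to level [m] but not at level [m+1]. *)
Lemma odo_embed_perfect : image_perfect s (odo_embed s).
Proof.
  intros x hx eps heps. destruct (pow_quarter_small (3 / 7 * eps)) as [m Hm]; [lra |].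
  set (y := odo_add s (s m) x).
  assert (hy : inG s y) by (apply inG_odo_add; assumption).
  exists y. split; [exact hy | split].
  - intros Heq.
    exact (odo_add_period_next s x m hpos hinc hx (odo_embed_injective y x hy hx Heq (S m))).
  - eapply Rle_lt_trans; [apply (odo_embed_close x y m hx hy) |].
    + intros n Hn. apply odo_add_period; assumption.
    + specialize (Hm m (le_n m)). lra.
Qed.

(* The level-[m] exponents of [T y] and [T x] exceed those of [y] and [x] by at least [m+1]. *)
Lemma odo_embed_odoT_ratio (x y : nat -> nat) (m : nat) : inG s x -> inG s y -> (0 < m)%nat ->
  (forall n, (n < m)%nat -> odo_exponents s y n = odo_exponents s x n) ->
  odo_exponents s y m <> odo_exponents s x m ->
  rank s m (odoT s x m) = (rank s m (x m) + 1)%nat ->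
  Rabs (odo_embed s (odoT s y) - odo_embed s (odoT s x))
    <= 28 / 5 * (/ 4) ^ (m + 1) * Rabs (odo_embed s y - odo_embed s x).
Proof.
  intros hx hy Hm Hag Hne Hrank.
  assert (hTx : inG s (odoT s x)) by (apply inG_odo_add; assumption).
  assert (hTy : inG s (odoT s y)) by (apply inG_odo_add; assumption).
  assert (Hcoord : forall n, (n < m)%nat -> y (S n) = x (S n))
    by (intros n Hn; apply odo_exponents_eq_iff, Hag; assumption).
  assert (Hym : y m = x m) by (destruct m as [| k]; [lia | apply Hcoord; lia]).
  assert (HagT : forall n, (n < m)%nat -> odo_exponents s (odoT s y) n = odo_exponents s (odoT s x) n)
    by (intros n Hn; unfold odo_exponents, odoT; rewrite Hcoord by exact Hn; reflexivity).
  assert (HresT : forall w, inG s w -> w m = odoT s x m -> ((w (S m)) mod s m = odoT s x m)%nat)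
    by (intros w hw Hw; rewrite <- Hw; symmetry; apply hw).
  assert (Hres : forall w, inG s w -> w m = x m -> ((w (S m)) mod s m = x m)%nat)
    by (intros w hw Hw; rewrite <- Hw; symmetry; apply hw).
  set (L := (block s m + (m + 1) * (s (S m) * (rank s m (x m) + 1)))%nat).
  assert (HL : forall w, inG s w -> w m = odoT s x m -> (L <= odo_exponents s w m)%nat).
  { intros w hw Hw. unfold L, odo_exponents. rewrite <- Hrank, <- (HresT w hw Hw).
    apply exponent_ge_rank. }
  assert (HU : forall w, inG s w -> w m = x m -> (odo_exponents s w m + (m + 1) <= L)%nat).
  { intros w hw Hw. unfold L, odo_exponents. rewrite <- (Hres w hw Hw).
    apply exponent_le_rank, hw. }
  pose proof (HL _ hTy ltac:(unfold odoT; rewrite Hym; reflexivity)) as HL1.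
  pose proof (HL _ hTx eq_refl) as HL2.
  pose proof (HU _ hy Hym) as HU1. pose proof (HU _ hx eq_refl) as HU2.
  set (U := Nat.max (odo_exponents s y m) (odo_exponents s x m)).
  pose proof (lac_sum_sub_le _ _ _ m L (odo_exponents_in_blocks _ hTy) (odo_exponents_in_blocks _ hTx)
                HagT HL1 HL2 (Nat.le_trans _ _ _ HL2 (Nat.lt_le_incl _ _ (proj2 (odo_exponents_in_blocks _ hTx m))))) as HA.
  pose proof (lac_sum_sub_ge _ _ _ m U (odo_exponents_in_blocks _ hy) (odo_exponents_in_blocks _ hx)
                Hag Hne (Nat.le_max_l _ _) (Nat.le_max_r _ _)) as HB.
  assert (HLU : (/ 4) ^ L <= (/ 4) ^ U * (/ 4) ^ (m + 1))
    by (rewrite <- pow_add; apply pow_quarter_le; unfold U; lia).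
  pose proof (pow_quarter_pos (m + 1)). unfold odo_embed. nra.
Qed.

Lemma odo_embed_conj_deriv_zero : conj_deriv_zero s (odo_embed s).
Proof.
  intros x hx eps heps.
  destruct (rank_odoT_eventually s x hpos hinc hdiv hx) as [M0 HM0].
  destruct (pow_quarter_small (5 / 28 * eps)) as [N HN]; [lra |].
  set (M := S (M0 + N)).
  exists (5 / 12 * (/ 4) ^ block s M). split; [pose proof (pow_quarter_pos (block s M)); lra |].
  intros y hy Hne Hclose.
  destruct (first_difference (odo_exponents s y) (odo_exponents s x)) as [m [Hm Hag]].
  { intros Heq. exact (Hne (lac_sum_ext _ _ Heq)). }
  assert (HMm : (M <= m)%nat).
  { apply Nat.nle_gt. intros Hlt.
    pose proof (lac_sum_sub_ge _ _ _ m (block s (S m)) (odo_exponents_in_blocks _ hy)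
                  (odo_exponents_in_blocks _ hx) Hag Hm
                  (Nat.lt_le_incl _ _ (proj2 (odo_exponents_in_blocks _ hy m)))
                  (Nat.lt_le_incl _ _ (proj2 (odo_exponents_in_blocks _ hx m)))).
    pose proof (pow_quarter_le _ _ (block_mono s (S m) M ltac:(lia))). unfold odo_embed in *. lra. }
  pose proof (odo_embed_odoT_ratio x y m hx hy ltac:(lia) Hag Hm (HM0 m ltac:(lia))) as Hratio.
  specialize (HN (m + 1)%nat ltac:(lia)).
  assert (HB : 0 < Rabs (odo_embed s y - odo_embed s x))
    by (apply Rabs_pos_lt, Rminus_eq_contra, Hne).
  unfold Rdiv. rewrite Rabs_mult, Rabs_inv.
  apply (Rmult_lt_reg_r (Rabs (odo_embed s y - odo_embed s x))); [exact HB |].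
  rewrite Rmult_assoc, Rinv_l, Rmult_1_r by lra. nra.
Qed.

End Embedding.

Theorem theorem3p1 (s : nat -> nat)
  (hpos : forall n : nat, (0 < s n)%nat)
  (hinc : forall n : nat, (s n < s (S n))%nat)
  (hdiv : forall n : nat, Nat.divide (s n) (s (S n))) :
  exists p : (nat -> nat) -> R,
    G_continuous s p /\ G_injective s p /\ image_perfect s p /\
    conj_deriv_zero s p.
Proof.
  exists (odo_embed s). split; [| split; [| split]].
  - apply odo_embed_continuous; assumption.
  - apply odo_embed_injective; assumption.
  - apply odo_embed_perfect; assumption.
  - apply odo_embed_conj_deriv_zero; assumption.
Qed.
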